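(* Let $S = s_1,\ldots,s_n$ be a sequence of nonnegative integers, let $0<\alpha<1$, $\gamma>0$, let $k$ be a positive integer, and let $\epsilon>0$. Suppose $(L^*,\beta^* )$ is an optimal solution of $\textsc{Geo}(\alpha)$ for $S,\alpha,\gamma,k$, and let $(L,\beta)$ be the output of $\textit{GeoAlpha}(S,\alpha,\gamma,k,\epsilon)$. Then \[ \mathrm{score}_{\mathrm{geo}}(L,S;\alpha,\beta,\gamma) \le (1+\epsilon)\,\mathrm{score}_{\mathrm{geo}}(L^*,S;\alpha,\beta^*,\gamma). \]
   Context: A level sequence is $L = \ell_1,\ldots,\ell_n$ of integers with $0\le\ell_i\le k$; set $\ell_0=0$. The penalty is $\mathrm{pen}(x,y)=\max(y-x,0)\,\gamma\log n$. The geometric distribution is $p_{\mathrm{geo}}(s;\lambda) = (1-\lambda)\lambda^s$. For $0<\beta<1$ the score is $\mathrm{score}_{\mathrm{geo}}(L,S;\alpha,\beta,\gamma) = \sum_{i=1}^n\big[-\log p_{\mathrm{geo}}(s_i;\beta\alpha^{\ell_i}) + \mathrm{pen}(\ell_{i-1},\ell_i)\big]$. Problem $\textsc{Geo}(\alpha)$: given $S,\alpha,\gamma,k$, find a level sequence $L$ and $\beta\in(0,1)$ minimizing this score. $\textit{Viterbi}(S,\alpha,\beta,\gamma,k,p_{\mathrm{geo}})$ returns a level sequence minimizing $\mathrm{score}_{\mathrm{geo}}(\cdot,S;\alpha,\beta,\gamma)$ for the fixed $\alpha,\beta$. Algorithm $\textit{GeoAlpha}(S,\alpha,\gamma,k,\epsilon)$: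 let $\mu=\frac1n\sum_i s_i$. If $\mu=0$, return the all-zero level sequence. Otherwise let $\eta=\mu/(\mu+1)$ and $c=1$; while $\eta^c \le \mu/(\mu+1/n)$: set $\beta=\eta^c$, compute $L=\textit{Viterbi}(S,\alpha,\beta,\gamma,k,p_{\mathrm{geo}})$, and set $c \leftarrow c/(1+\epsilon)$. Return the pair $(L,\beta)$ with the smallest score $\mathrm{score}_{\mathrm{geo}}(L,S;\alpha,\beta,\gamma)$ among the tested ones. *)

From Stdlib Require Import Reals List.
Import ListNotations.
Open Scope R_scope.

Definition sumR (n : nat) (f : nat -> R) : R :=
  fold_right Rplus 0 (map f (seq 0 n)).

Definition len (S : list nat) : nat := length S.

Definition level_seq (k : nat) (S : list nat) (L : list nat) : Prop :=
  length L = length S /\ Forall (fun l => (l <= k)%nat) L.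

Definition p_geo (s : nat) (lam : R) : R := (1 - lam) * lam ^ s.

Definition pen (gamma : R) (n : nat) (x y : nat) : R :=
  Rmax (INR y - INR x) 0 * gamma * ln (INR n).

(* 0-indexed: level l_{i+1} = nth i L 0; previous level l_i (with l_0 = 0). *)
Definition prev_level (L : list nat) (i : nat) : nat :=
  match i with O => O | Datatypes.S j => nth j L O end.

Definition score_geo (L S : list nat) (alpha beta gamma : R) : R :=
  sumR (length S) (fun i =>
    - ln (p_geo (nth i S O) (beta * alpha ^ (nth i L O)))
    + pen gamma (length S) (prev_level L i) (nth i L O)).

Definition geo_optimal (S : list nat) (alpha gamma : R) (k : nat)
    (Lopt : list nat) (bopt : R) : Prop :=
  level_seq k S Lopt /\ 0 < bopt < 1 /\
  forall L b, level_seq k S L -> 0 < b < 1 ->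
    score_geo Lopt S alpha bopt gamma <= score_geo L S alpha b gamma.

Definition viterbi_spec (S : list nat) (alpha gamma : R) (k : nat)
    (vit : R -> list nat) : Prop :=
  forall b, 0 < b < 1 ->
    level_seq k S (vit b) /\
    forall L, level_seq k S L ->
      score_geo (vit b) S alpha b gamma <= score_geo L S alpha b gamma.

Definition mu (S : list nat) : R :=
  sumR (length S) (fun i => INR (nth i S O)) / INR (length S).

Definition eta (S : list nat) : R := mu S / (mu S + 1).

Definition c_iter (eps : R) (j : nat) : R := / (1 + eps) ^ j.

Definition beta_iter (S : list nat) (eps : R) (j : nat) : R :=
  Rpower (eta S) (c_iter eps j).

Definition loop_cond (S : list nat) (eps : R) (j : nat) : Prop :=
  beta_iter S eps j <= mu S / (mu S + / INR (length S)).

(* iteration j is executed iff the while-condition held at iterations 0..j *)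
Definition tested (S : list nat) (eps : R) (j : nat) : Prop :=
  forall i, (i <= j)%nat -> loop_cond S eps i.

(* (L, beta) is an output of GeoAlpha(S, alpha, gamma, k, eps) run with the
   Viterbi procedure vit (ties broken arbitrarily). *)
Definition geoalpha_output (S : list nat) (alpha gamma : R) (k : nat) (eps : R)
    (vit : R -> list nat) (L : list nat) (beta : R) : Prop :=
  (mu S = 0 /\ L = repeat O (length S)) \/
  (mu S <> 0 /\
   exists j, tested S eps j /\ beta = beta_iter S eps j /\ L = vit beta /\
     forall i, tested S eps i ->
       score_geo L S alpha beta gamma <=
       score_geo (vit (beta_iter S eps i)) S alpha (beta_iter S eps i) gamma).

From Stdlib Require Import Reals List Lra Lia.
From Coquelicot Require Import Rcomplements.
Open Scope R_scope.

(* For [0 < beta < 1] the score splits as [N(beta) - T ln beta + C(L)], where [T] is the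
   total of [S], [N(beta) = sum_i - ln (1 - beta alpha^l_i)] is nonnegative and increasing
   in [beta], and [C(L)] (level and penalty costs) is nonnegative and free of [beta].
   An optimum [(Lopt, bopt)] can be normalised so that some level is 0 (lower every level by
   the minimum [m] and multiply [bopt] by [alpha^m]); then [beta] can be moved into
   [[T/(T+n), T/(T+1)] = [eta, loop bound]] without increasing the score, by comparing with
   the binary log-likelihoods maximised at the two endpoints. Every [b] in that interval is
   [b = eta^t] with [0 < t <= 1], so some tested [beta_j = eta^(c_j)] equals [b^r] with
   [1 <= r <= 1 + eps], and [score (L, b^r) <= r * score (L, b)]. *)

Lemma sumR_S n f : sumR (S n) f = sumR n f + f n.
Proof.
  unfold sumR. rewrite seq_S, map_app, fold_right_app. simpl.
  generalize (map f (seq 0 n)). intros l.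
  induction l as [|x l IH]; simpl; lra.
Qed.

Lemma sumR_ext n f g : (forall i, (i < n)%nat -> f i = g i) -> sumR n f = sumR n g.
Proof.
  induction n as [|n IH]; intros H; [reflexivity|].
  rewrite !sumR_S, (H n) by lia. f_equal. apply IH. intros; apply H; lia.
Qed.

Lemma sumR_le n f g : (forall i, (i < n)%nat -> f i <= g i) -> sumR n f <= sumR n g.
Proof.
  induction n as [|n IH]; intros H; [unfold sumR; simpl; lra|].
  rewrite !sumR_S. apply Rplus_le_compat; [apply IH; intros |]; apply H; lia.
Qed.

Lemma sumR_lt n f g : (0 < n)%nat -> (forall i, (i < n)%nat -> f i < g i) ->
  sumR n f < sumR n g.
Proof.
  intros Hn H. destruct n as [|n]; [lia|]. rewrite !sumR_S.
  apply Rplus_le_lt_compat; [apply sumR_le; intros; left |]; apply H; lia.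
Qed.

Lemma sumR_plus n f g : sumR n (fun i => f i + g i) = sumR n f + sumR n g.
Proof. induction n as [|n IH]; [unfold sumR; simpl; lra | rewrite !sumR_S, IH; lra]. Qed.

Lemma sumR_minus n f g : sumR n (fun i => f i - g i) = sumR n f - sumR n g.
Proof. induction n as [|n IH]; [unfold sumR; simpl; lra | rewrite !sumR_S, IH; lra]. Qed.

Lemma sumR_scal n c f : sumR n (fun i => c * f i) = c * sumR n f.
Proof. induction n as [|n IH]; [unfold sumR; simpl; lra | rewrite !sumR_S, IH; lra]. Qed.

Lemma sumR_const n c : sumR n (fun _ => c) = INR n * c.
Proof.
  induction n as [|n IH]; [unfold sumR; simpl; lra | rewrite !sumR_S, IH, S_INR; lra].
Qed.

Lemma sumR_nonneg n f : (forall i, (i < n)%nat -> 0 <= f i) -> 0 <= sumR n f.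
Proof.
  intros H. replace 0 with (sumR n (fun _ => 0)) by (rewrite sumR_const; lra).
  now apply sumR_le.
Qed.

Lemma sumR_term_le n f i : (forall j, (j < n)%nat -> 0 <= f j) -> (i < n)%nat ->
  f i <= sumR n f.
Proof.
  induction n as [|n IH]; intros H Hi; [lia|]. rewrite sumR_S.
  assert (0 <= f n) by (apply H; lia).
  destruct (Nat.eq_dec i n) as [-> | Hin].
  - assert (0 <= sumR n f) by (apply sumR_nonneg; intros; apply H; lia). lra.
  - assert (f i <= sumR n f) by (apply IH; [intros; apply H |]; lia). lra.
Qed.

Lemma ln_lt_0 x : 0 < x < 1 -> ln x < 0.
Proof. intros Hx. rewrite <- ln_1. apply ln_increasing; lra. Qed.

Lemma ln_le_sub_1 x : 0 < x -> ln x <= x - 1.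
Proof. intros Hx. pose proof (exp_ineq1_le (ln x)) as H. rewrite exp_ln in H; lra. Qed.

Lemma ln_INR_nonneg N : (1 <= N)%nat -> 0 <= ln (INR N).
Proof.
  intros HN. rewrite <- ln_1. apply ln_le; [lra|].
  replace 1 with (INR 1) by reflexivity. apply le_INR; lia.
Qed.

Lemma ratio_in_01 A B : 0 < A -> 0 < B -> 0 < A / (A + B) < 1.
Proof.
  intros HA HB. split; [apply Rdiv_lt_0_compat; lra|].
  apply (proj1 (Rdiv_lt_1 A (A + B) ltac:(lra))). lra.
Qed.

(* Bound both log-ratios to the maximiser through [ln y <= y - 1]; the bounds cancel. *)
Lemma binary_gibbs A B x : 0 < A -> 0 < B -> 0 < x < 1 ->
  A * ln x + B * ln (1 - x) <= A * ln (A / (A + B)) + B * ln (1 - A / (A + B)).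
Proof.
  intros HA HB Hx. set (p := A / (A + B)).
  assert (Hp : 0 < p) by (apply Rdiv_lt_0_compat; lra).
  assert (Hq : 1 - p = B / (A + B)) by (unfold p; field; lra).
  assert (Hq0 : 0 < 1 - p) by (rewrite Hq; apply Rdiv_lt_0_compat; lra).
  assert (H1 : ln (x / p) <= x / p - 1) by (apply ln_le_sub_1, Rdiv_lt_0_compat; lra).
  assert (H2 : ln ((1 - x) / (1 - p)) <= (1 - x) / (1 - p) - 1)
    by (apply ln_le_sub_1, Rdiv_lt_0_compat; lra).
  rewrite ln_div in H1, H2 by lra.
  assert (E1 : A * (x / p - 1) = (A + B) * x - A) by (unfold p; field; lra).
  assert (E2 : B * ((1 - x) / (1 - p) - 1) = (A + B) * (1 - x) - B)
    by (rewrite Hq; field; split; lra).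
  apply Rmult_le_compat_l with (r := A) in H1; [|lra].
  apply Rmult_le_compat_l with (r := B) in H2; [|lra].
  lra.
Qed.

Lemma ln_one_sub_diff_antimono a b c : 0 <= a <= 1 -> 0 <= b <= c -> c < 1 ->
  ln (1 - c) - ln (1 - c * a) <= ln (1 - b) - ln (1 - b * a).
Proof.
  intros Ha Hbc Hc.
  assert (Hprod : ln ((1 - c) * (1 - b * a)) <= ln ((1 - b) * (1 - c * a))).
  { apply ln_le; [apply Rmult_lt_0_compat |]; nra. }
  rewrite !ln_mult in Hprod by nra. lra.
Qed.

Lemma Rpower_antimono x y z : 0 < x < 1 -> y <= z -> Rpower x z <= Rpower x y.
Proof.
  intros Hx Hyz. pose proof (ln_lt_0 x Hx). unfold Rpower.
  destruct (Rle_lt_or_eq_dec y z Hyz) as [Hlt | <-]; [|lra].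
  left. apply exp_increasing. nra.
Qed.

Lemma Rpower_lt_1 x y : 0 < x < 1 -> 0 < y -> 0 < Rpower x y < 1.
Proof.
  intros Hx Hy. pose proof (ln_lt_0 x Hx). unfold Rpower.
  split; [apply exp_pos|]. rewrite <- exp_0. apply exp_increasing. nra.
Qed.

Lemma exists_inv_pow_between q t : 1 < q -> 0 < t <= 1 ->
  exists j, t <= / q ^ j <= q * t.
Proof.
  intros Hq Ht.
  assert (Hlast : forall N, / q ^ N < t -> exists j, t <= / q ^ j /\ / q ^ S j < t).
  { induction N as [|N IH]; intros HN.
    - simpl in HN. rewrite Rinv_1 in HN. lra.
    - destruct (Rlt_le_dec (/ q ^ N) t) as [HNt | HNt]; [now apply IH | now exists N]. }
  destruct (pow_lt_1_zero (/ q)) with (y := t) as [N HN].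
  { rewrite Rabs_pos_eq by (left; apply Rinv_0_lt_compat; lra).
    rewrite <- Rinv_1. apply Rinv_lt_contravar; lra. }
  { lra. }
  specialize (HN N (le_n N)).
  rewrite pow_inv, Rabs_pos_eq in HN by (left; apply Rinv_0_lt_compat, pow_lt; lra).
  destruct (Hlast N HN) as [j [Hj HSj]]. exists j. split; [exact Hj|].
  assert (/ q ^ j = q * / q ^ S j) by (simpl; field; split; [apply pow_nonzero|]; lra).
  nra.
Qed.

Definition total (S : list nat) : R := sumR (length S) (fun i => INR (nth i S O)).

Definition norm_cost (L S : list nat) (alpha b : R) : R :=
  sumR (length S) (fun i => - ln (1 - b * alpha ^ nth i L O)).

Definition level_cost (L S : list nat) (alpha gamma : R) : R :=
  sumR (length S) (fun i =>
    - INR (nth i S O) * ln (alpha ^ nth i L O)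
    + pen gamma (length S) (prev_level L i) (nth i L O)).

Lemma total_nonneg S : 0 <= total S.
Proof. apply sumR_nonneg. intros. apply pos_INR. Qed.

Lemma length_pos_of_total_pos S : 0 < total S -> (1 <= length S)%nat.
Proof.
  unfold total. destruct (length S); [unfold sumR; simpl; lra | lia].
Qed.

Lemma pow_in_01 alpha l : 0 < alpha < 1 -> 0 < alpha ^ l <= 1.
Proof.
  intros Ha. split; [apply pow_lt; lra|].
  induction l as [|l IH]; simpl; [lra|]. nra.
Qed.

Lemma neg_ln_p_geo s lam : 0 < lam < 1 ->
  - ln (p_geo s lam) = - ln (1 - lam) - INR s * ln lam.
Proof.
  intros Hlam. unfold p_geo. rewrite ln_mult, ln_pow; [lra | lra | lra | apply pow_lt; lra].
Qed.

Lemma score_geo_decomp L S alpha b gamma : 0 < alpha < 1 -> 0 < b < 1 ->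
  score_geo L S alpha b gamma =
  norm_cost L S alpha b - total S * ln b + level_cost L S alpha gamma.
Proof.
  intros Ha Hb. unfold score_geo, norm_cost, level_cost, total.
  rewrite <- (Rmult_comm (ln b)), <- sumR_scal, <- sumR_minus, <- sumR_plus.
  apply sumR_ext. intros i _.
  pose proof (pow_in_01 alpha (nth i L O) Ha).
  rewrite neg_ln_p_geo, ln_mult by (try split; nra). ring.
Qed.

Lemma norm_cost_nonneg L S alpha b : 0 < alpha < 1 -> 0 <= b < 1 ->
  0 <= norm_cost L S alpha b.
Proof.
  intros Ha Hb. apply sumR_nonneg. intros i _.
  pose proof (pow_in_01 alpha (nth i L O) Ha).
  assert (Hle : ln (1 - b * alpha ^ nth i L O) <= ln 1) by (apply ln_le; nra).
  rewrite ln_1 in Hle. lra.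
Qed.

Lemma norm_cost_le L S alpha b c : 0 < alpha < 1 -> 0 <= b <= c -> c < 1 ->
  norm_cost L S alpha b <= norm_cost L S alpha c.
Proof.
  intros Ha Hbc Hc. apply sumR_le. intros i _.
  pose proof (pow_in_01 alpha (nth i L O) Ha).
  assert (ln (1 - c * alpha ^ nth i L O) <= ln (1 - b * alpha ^ nth i L O))
    by (apply ln_le; nra).
  lra.
Qed.

Lemma norm_cost_lt L S alpha b c : (1 <= length S)%nat -> 0 < alpha < 1 ->
  0 <= b < c -> c < 1 -> norm_cost L S alpha b < norm_cost L S alpha c.
Proof.
  intros Hn Ha Hbc Hc. apply sumR_lt; [lia|]. intros i _.
  pose proof (pow_in_01 alpha (nth i L O) Ha).
  assert (ln (1 - c * alpha ^ nth i L O) < ln (1 - b * alpha ^ nth i L O))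
    by (apply ln_increasing; nra).
  lra.
Qed.

Lemma pen_nonneg gamma N x y : 0 <= gamma -> (1 <= N)%nat -> 0 <= pen gamma N x y.
Proof.
  intros Hg HN. pose proof (ln_INR_nonneg N HN). unfold pen.
  pose proof (Rmax_r (INR y - INR x) 0).
  apply Rmult_le_pos; [apply Rmult_le_pos|]; lra.
Qed.

Lemma pen_le gamma N x y x' y' : 0 <= gamma -> (1 <= N)%nat ->
  INR y - INR x <= INR y' - INR x' -> pen gamma N x y <= pen gamma N x' y'.
Proof.
  intros Hg HN Hxy. pose proof (ln_INR_nonneg N HN). unfold pen.
  apply Rmult_le_compat_r; [lra|]. apply Rmult_le_compat_r; [lra|].
  now apply Rle_max_compat_r.
Qed.

Lemma level_cost_nonneg L S alpha gamma : 0 < alpha < 1 -> 0 <= gamma ->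
  0 <= level_cost L S alpha gamma.
Proof.
  intros Ha Hg. apply sumR_nonneg. intros i Hi.
  pose proof (pow_in_01 alpha (nth i L O) Ha).
  assert (ln (alpha ^ nth i L O) <= 0) by (rewrite <- ln_1; apply ln_le; lra).
  pose proof (pos_INR (nth i S O)).
  pose proof (pen_nonneg gamma (length S) (prev_level L i) (nth i L O) Hg ltac:(lia)).
  nra.
Qed.

Lemma score_geo_nonneg L S alpha b gamma : 0 < alpha < 1 -> 0 < b < 1 -> 0 <= gamma ->
  0 <= score_geo L S alpha b gamma.
Proof.
  intros Ha Hb Hg. rewrite score_geo_decomp by assumption.
  pose proof (norm_cost_nonneg L S alpha b Ha ltac:(lra)).
  pose proof (level_cost_nonneg L S alpha gamma Ha Hg).
  pose proof (total_nonneg S). pose proof (ln_lt_0 b Hb). nra.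
Qed.

(* Raising [beta] to a power [r >= 1] lowers the normalisation part and multiplies the
   [- total S * ln beta] part by [r]; everything else is nonnegative. *)
Lemma score_geo_Rpower_le L S alpha b r gamma : 0 < alpha < 1 -> 0 < b < 1 ->
  0 <= gamma -> 1 <= r ->
  score_geo L S alpha (Rpower b r) gamma <= r * score_geo L S alpha b gamma.
Proof.
  intros Ha Hb Hg Hr. pose proof (Rpower_lt_1 b r Hb ltac:(lra)) as Hbr.
  rewrite !score_geo_decomp, ln_Rpower by assumption.
  assert (Rpower b r <= b) by (rewrite <- (Rpower_1 b) at 2 by lra; now apply Rpower_antimono).
  pose proof (norm_cost_le L S alpha (Rpower b r) b Ha ltac:(lra) ltac:(lra)).
  pose proof (norm_cost_nonneg L S alpha b Ha ltac:(lra)).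
  pose proof (level_cost_nonneg L S alpha gamma Ha Hg).
  pose proof (total_nonneg S). pose proof (ln_lt_0 b Hb).
  nra.
Qed.

(* With no successes the score is strictly increasing in [beta], so it has no minimiser. *)
Lemma geo_optimal_total_pos S alpha gamma k Lopt bopt :
  0 < alpha < 1 -> 0 <= gamma -> (1 <= length S)%nat ->
  geo_optimal S alpha gamma k Lopt bopt -> 0 < total S.
Proof.
  intros Ha Hg Hn [HL [Hb Hopt]].
  destruct (Rle_lt_or_eq_dec _ _ (total_nonneg S)) as [HT | HT]; [exact HT | exfalso].
  specialize (Hopt Lopt (bopt / 2) HL ltac:(lra)).
  rewrite !score_geo_decomp, <- HT in Hopt by (try split; lra).
  pose proof (norm_cost_lt Lopt S alpha (bopt / 2) bopt Hn Ha ltac:(lra) ltac:(lra)).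
  lra.
Qed.

Lemma exists_argmin_nat (f : nat -> nat) n : (0 < n)%nat ->
  exists i0, (i0 < n)%nat /\ forall i, (i < n)%nat -> (f i0 <= f i)%nat.
Proof.
  induction n as [|n IH]; intros Hn; [lia|].
  destruct (Nat.eq_dec n 0) as [-> | Hn0].
  { exists O. split; [lia|]. intros i Hi. replace i with O by lia. lia. }
  destruct IH as [i0 [Hi0 Hmin]]; [lia|].
  destruct (Nat.le_gt_cases (f i0) (f n)).
  - exists i0. split; [lia|]. intros i Hi.
    destruct (Nat.eq_dec i n) as [-> | Hin]; [lia | apply Hmin; lia].
  - exists n. split; [lia|]. intros i Hi.
    destruct (Nat.eq_dec i n) as [-> | Hin]; [lia | specialize (Hmin i); lia].
Qed.

(* [0 - m = 0] on [nat], so the default value of [nth] survives the [map]. *)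
Lemma nth_map_sub (L : list nat) m i :
  nth i (map (fun l => l - m)%nat L) O = (nth i L O - m)%nat.
Proof. exact (map_nth (fun l => l - m)%nat L O i). Qed.

(* Lowering all levels by [m] and multiplying [beta] by [alpha ^ m] keeps every rate
   [beta * alpha ^ l_i]; only the penalty of the first step can change, and it decreases. *)
Lemma score_geo_shift_le L S alpha b gamma m : 0 <= gamma ->
  (forall i, (i < length S)%nat -> (m <= nth i L O)%nat) ->
  score_geo (map (fun l => l - m)%nat L) S alpha (b * alpha ^ m) gamma
  <= score_geo L S alpha b gamma.
Proof.
  intros Hg Hm. apply sumR_le. intros i Hi.
  pose proof (Hm i Hi) as Hmi. rewrite nth_map_sub.
  rewrite Rmult_assoc, <- pow_add, Nat.add_comm, Nat.sub_add by exact Hmi.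
  apply Rplus_le_compat_l, pen_le; [exact Hg | lia |].
  destruct i as [|j]; simpl prev_level.
  - rewrite minus_INR by exact Hmi. pose proof (pos_INR m). simpl. lra.
  - rewrite nth_map_sub, !minus_INR by (try apply Hm; lia). lra.
Qed.

Lemma level_seq_normalize k S alpha gamma L b :
  0 < alpha < 1 -> 0 <= gamma -> (1 <= length S)%nat -> level_seq k S L -> 0 < b < 1 ->
  exists L' b' i0, level_seq k S L' /\ 0 < b' < 1 /\
    (i0 < length S)%nat /\ nth i0 L' O = O /\
    score_geo L' S alpha b' gamma <= score_geo L S alpha b gamma.
Proof.
  intros Ha Hg Hn [HlenL HL] Hb.
  destruct (exists_argmin_nat (fun i => nth i L O) (length S)) as [i0 [Hi0 Hmin]]; [lia|].
  set (m := nth i0 L O) in Hmin.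
  exists (map (fun l => l - m)%nat L), (b * alpha ^ m), i0. split; [|split; [|split; [|split]]].
  - split; [now rewrite length_map|].
    apply Forall_map. eapply Forall_impl; [|exact HL]. simpl. intros; lia.
  - pose proof (pow_in_01 alpha m Ha). split; nra.
  - exact Hi0.
  - rewrite nth_map_sub. lia.
  - now apply score_geo_shift_le.
Qed.

Lemma score_geo_lower_clamp L S alpha b gamma : 0 < alpha < 1 -> 0 < total S ->
  0 < b <= total S / (total S + INR (length S)) ->
  score_geo L S alpha (total S / (total S + INR (length S))) gamma
  <= score_geo L S alpha b gamma.
Proof.
  intros Ha HT Hb.
  assert (HN : 1 <= INR (length S))
    by (apply (le_INR 1), length_pos_of_total_pos; exact HT).
  set (eta0 := total S / (total S + INR (length S))) in *.
  assert (Heta : 0 < eta0 < 1) by (apply ratio_in_01; lra).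
  rewrite !score_geo_decomp by (try split; lra).
  assert (Hnorm : norm_cost L S alpha eta0
          <= norm_cost L S alpha b + INR (length S) * (ln (1 - b) - ln (1 - eta0))).
  { unfold norm_cost. rewrite <- sumR_const, <- sumR_plus. apply sumR_le. intros i _.
    pose proof (pow_in_01 alpha (nth i L O) Ha).
    pose proof (ln_one_sub_diff_antimono (alpha ^ nth i L O) b eta0). lra. }
  pose proof (binary_gibbs (total S) (INR (length S)) b HT ltac:(lra) ltac:(lra)) as Hgibbs.
  fold eta0 in Hgibbs. lra.
Qed.

(* A level-0 step has rate [beta] itself, so its normalisation term plays the role of
   the single failure in the likelihood maximised at [total S / (total S + 1)]. *)
Lemma score_geo_upper_clamp L S alpha b gamma i0 : 0 < alpha < 1 -> 0 < total S ->
  (i0 < length S)%nat -> nth i0 L O = O -> total S / (total S + 1) <= b < 1 ->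
  score_geo L S alpha (total S / (total S + 1)) gamma <= score_geo L S alpha b gamma.
Proof.
  intros Ha HT Hi0 HL0 Hb.
  set (b1 := total S / (total S + 1)) in *.
  assert (Hb1 : 0 < b1 < 1) by (apply ratio_in_01; lra).
  rewrite !score_geo_decomp by (try split; lra).
  assert (Hnorm : ln (1 - b1) - ln (1 - b) <= norm_cost L S alpha b - norm_cost L S alpha b1).
  { unfold norm_cost. rewrite <- sumR_minus.
    set (f := fun i => - ln (1 - b * alpha ^ nth i L O) - - ln (1 - b1 * alpha ^ nth i L O)).
    replace (ln (1 - b1) - ln (1 - b)) with (f i0)
      by (unfold f; rewrite HL0; simpl; rewrite !Rmult_1_r; ring).
    apply sumR_term_le; [|exact Hi0]. intros i _. unfold f.
    pose proof (pow_in_01 alpha (nth i L O) Ha).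
    assert (ln (1 - b * alpha ^ nth i L O) <= ln (1 - b1 * alpha ^ nth i L O))
      by (apply ln_le; nra).
    lra. }
  pose proof (binary_gibbs (total S) 1 b HT ltac:(lra) ltac:(lra)) as Hgibbs.
  fold b1 in Hgibbs. lra.
Qed.

Lemma score_geo_clamp L S alpha b gamma i0 : 0 < alpha < 1 -> 0 < total S ->
  (i0 < length S)%nat -> nth i0 L O = O -> 0 < b < 1 ->
  exists b', total S / (total S + INR (length S)) <= b' <= total S / (total S + 1) /\
    score_geo L S alpha b' gamma <= score_geo L S alpha b gamma.
Proof.
  intros Ha HT Hi0 HL0 Hb.
  assert (Hle : total S / (total S + INR (length S)) <= total S / (total S + 1)).
  { assert (1 <= INR (length S)) by (apply (le_INR 1); lia).
    unfold Rdiv. apply Rmult_le_compat_l; [lra|]. apply Rinv_le_contravar; lra. }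
  destruct (Rle_dec b (total S / (total S + INR (length S)))) as [Hlo | Hlo].
  { exists (total S / (total S + INR (length S))). split; [lra|].
    apply score_geo_lower_clamp; auto; lra. }
  destruct (Rle_dec (total S / (total S + 1)) b) as [Hhi | Hhi].
  { exists (total S / (total S + 1)). split; [lra|].
    apply (score_geo_upper_clamp L S alpha b gamma i0); auto; lra. }
  exists b. split; lra.
Qed.

Lemma eta_total S : (1 <= length S)%nat ->
  eta S = total S / (total S + INR (length S)).
Proof.
  intros Hn. assert (1 <= INR (length S)) by (apply (le_INR 1); lia).
  pose proof (total_nonneg S).
  unfold eta, mu. fold (total S). field. lra.
Qed.

Lemma loop_bound_total S : (1 <= length S)%nat ->
  mu S / (mu S + / INR (length S)) = total S / (total S + 1).
Proof.
  intros Hn. assert (1 <= INR (length S)) by (apply (le_INR 1); lia).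
  pose proof (total_nonneg S).
  unfold mu. fold (total S). field. lra.
Qed.

(* The exponents [c_j = (1 + eps)^-j] decrease to 0 with ratio [1 + eps], so for
   [b = eta^t] with [0 < t <= 1] some [c_j] lies in [[t, (1 + eps) t]]; then
   [eta^c_i <= b] for all [i <= j], so the loop test passes up to [j]. *)
Lemma tested_Rpower_approx S eps b : 0 < eps -> 0 < eta S <= b -> b < 1 ->
  b <= mu S / (mu S + / INR (length S)) ->
  exists j r, tested S eps j /\ 1 <= r <= 1 + eps /\ beta_iter S eps j = Rpower b r.
Proof.
  intros He Heta Hb Hbound.
  pose proof (ln_lt_0 (eta S) ltac:(lra)). pose proof (ln_lt_0 b ltac:(lra)).
  assert (ln (eta S) <= ln b) by (apply ln_le; lra).
  set (t := ln b / ln (eta S)).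
  assert (Htl : t * ln (eta S) = ln b) by (unfold t; field; lra).
  assert (Ht : 0 < t <= 1) by (split; nra).
  assert (Hbt : Rpower (eta S) t = b) by (unfold Rpower; rewrite Htl; apply exp_ln; lra).
  destruct (exists_inv_pow_between (1 + eps) t) as [j [Hj1 Hj2]]; [lra | exact Ht |].
  exists j, (c_iter eps j / t). split; [|split].
  - intros i Hij. unfold loop_cond, beta_iter, c_iter. apply Rle_trans with b; [|exact Hbound].
    rewrite <- Hbt. apply Rpower_antimono; [lra|].
    apply Rle_trans with (/ (1 + eps) ^ j); [exact Hj1|].
    apply Rinv_le_contravar; [apply pow_lt; lra|]. apply Rle_pow; [lra | exact Hij].
  - assert (c_iter eps j / t * t = c_iter eps j) by (field; lra).
    unfold c_iter in *. split; nra.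
  - unfold beta_iter. rewrite <- Hbt, Rpower_mult. f_equal. field. lra.
Qed.

Theorem proposition2 (S : list nat) (alpha gamma : R) (k : nat) (eps : R)
    (Lopt : list nat) (bopt : R) (vit : R -> list nat) (L : list nat) (beta : R) :
  0 < alpha < 1 -> 0 < gamma -> (1 <= k)%nat -> 0 < eps ->
  geo_optimal S alpha gamma k Lopt bopt ->
  viterbi_spec S alpha gamma k vit ->
  geoalpha_output S alpha gamma k eps vit L beta ->
  score_geo L S alpha beta gamma <= (1 + eps) * score_geo Lopt S alpha bopt gamma.
Proof.
  intros Ha Hg _ He Hopt Hvit Hout.
  destruct (Nat.eq_dec (length S) 0) as [Hn0 | Hn0].
  { unfold score_geo. rewrite Hn0. unfold sumR. simpl. lra. }
  assert (Hn : (1 <= length S)%nat) by lia.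
  assert (HN : 0 < INR (length S)) by (apply lt_0_INR; lia).
  assert (HT : 0 < total S) by (apply (geo_optimal_total_pos S alpha gamma k Lopt bopt); auto; lra).
  destruct Hout as [[Hmu0 _] | [_ [j0 [_ [-> [-> Hbest]]]]]].
  { unfold mu in Hmu0. fold (total S) in Hmu0.
    pose proof (Rdiv_lt_0_compat _ _ HT HN). lra. }
  destruct Hopt as [HLopt [Hbopt _]].
  destruct (level_seq_normalize k S alpha gamma Lopt bopt)
    as [L1 [b1 [i0 [HL1 [Hb1 [Hi0 [HL10 Hsc1]]]]]]]; auto; [lra|].
  destruct (score_geo_clamp L1 S alpha b1 gamma i0) as [b2 [Hb2 Hsc2]]; auto.
  pose proof (ratio_in_01 _ _ HT HN) as Heta. pose proof (ratio_in_01 _ _ HT Rlt_0_1) as Hbound.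
  rewrite <- eta_total in Heta, Hb2 by exact Hn.
  rewrite <- loop_bound_total in Hbound, Hb2 by exact Hn.
  destruct (tested_Rpower_approx S eps b2) as [j [r [Htested [Hr Hj]]]]; try lra.
  assert (Hbj : 0 < beta_iter S eps j < 1) by (rewrite Hj; apply Rpower_lt_1; lra).
  destruct (Hvit _ Hbj) as [_ Hvit_opt].
  pose proof (Hbest j Htested). pose proof (Hvit_opt L1 HL1).
  pose proof (score_geo_Rpower_le L1 S alpha b2 r gamma Ha ltac:(lra) ltac:(lra) ltac:(lra)).
  pose proof (score_geo_nonneg L1 S alpha b2 gamma Ha ltac:(lra) ltac:(lra)).
  rewrite Hj in *. nra.
Qed.
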